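(* Let $p\ge5$ be a prime and $n,k\in\mathbb{N}$ with $n>k$. Then \[ \sum_{j=1}^{p-1}\binom{np}{kp+j}^2\binom{2kp+2j}{kp+j}\binom{2np-2kp-2j}{np-kp-j}\equiv 8p^3B_{p-3}\,n(n-k)^2\binom{n}{k}^2\binom{2k}{k}\binom{2n-2k-2}{n-k-1}\pmod{p^4}. \]
   Context: The Bernoulli numbers $B_m$ are defined by $\frac{z}{e^z-1}=\sum_{m\ge0}B_m\frac{z^m}{m!}$. For rationals $a,b$, $a\equiv b\pmod{p^m}$ means $(a-b)/p^m$ is a rational number whose denominator is not divisible by $p$. *)

From mathcomp Require Import all_boot all_order all_algebra.
Set Implicit Arguments. Unset Strict Implicit. Unset Printing Implicit Defensive.
Import Order.TTheory GRing.Theory Num.Theory.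
Local Open Scope ring_scope.

(* Bernoulli numbers B_0, ..., B_m (as rationals), via the recurrence
   B_0 = 1,  sum_{i=0}^{m} C(m+1,i) B_i = 0 for m >= 1,
   which is the coefficient identity equivalent to z/(e^z-1) = sum B_m z^m/m!
   (so B_1 = -1/2). *)
Fixpoint bern_seq (m : nat) : seq rat :=
  match m with
  | 0%N => [:: 1]
  | m'.+1 =>
      let s := bern_seq m' in
      rcons s (- (m'.+2%:R)^-1 *
               \sum_(i < m'.+1) ('C(m'.+2, i))%:R * s`_i)
  end.

Definition bernoulli (m : nat) : rat := (bern_seq m)`_m.

(* a = b (mod p^m) for rationals: (a - b)/p^m has denominator prime to p. *)
Definition rat_congr (p m : nat) (a b : rat) : Prop :=
  ~~ (p%:Z %| denq ((a - b) / (p%:R ^+ m)))%Z.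

From mathcomp Require Import all_boot all_order all_algebra.
From mathcomp Require Import zify ring.
Set Implicit Arguments. Unset Strict Implicit. Unset Printing Implicit Defensive.
Import Order.TTheory GRing.Theory Num.Theory.
Local Open Scope ring_scope.

(* Write p = 2h + 1.  For 0 < j < p the binomial C(np, kp + j) is divisible by
   p, and so is exactly one of the central binomials C(2(kp + j), kp + j) and
   C(2(np - kp - j), np - kp - j): doubling the last base-p digit carries
   precisely when that digit exceeds h.  Lucas' theorem and the recurrence
   (N + 1) C(2N + 2, N + 1) = 2 (2N + 1) C(2N, N) compute the three quotients
   mod p, showing that the j-th summand is p^3 c / j'^3 mod p^4, where
   j' = min(j, p - j) and c only depends on the side of h on which j lies.
   The sum thus reduces to p^3 times the half harmonic sum of cubes
   sum_(j <= h) j^-3, which is -2 B_(p-3) mod p: compare Faulhaber's formula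
   for sum_(j < p) j^(p-3) modulo p^2 with the same sum folded at h and split
   by parity. *)

(** * Arithmetic modulo a prime *)

Section PrimeField.

Variable p : nat.
Hypothesis p_pr : prime p.

Let p_gt0 : (0 < p)%N. Proof. exact: prime_gt0. Qed.

Lemma natrFp_eq0 n : ((n%:R : 'F_p) == 0) = (p %| n)%N.
Proof. by rewrite (dvdn_pcharf (pchar_Fp p_pr)). Qed.

Lemma natrFp_neq0 n : (0 < n < p)%N -> (n%:R : 'F_p) != 0.
Proof. by move=> n_bnd; rewrite natrFp_eq0; apply/negP => /dvdn_leq; lia. Qed.

Lemma natrFp_mulp_add n a : ((n * p + a)%N%:R : 'F_p) = a%:R.
Proof. by rewrite natrD natrM pchar_Fp_0 // mulr0 add0r. Qed.

Lemma binFp_p_eq0 s : (0 < s < p)%N -> ('C(p, s)%:R : 'F_p) = 0.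
Proof. by move=> s_bnd; apply/eqP; rewrite natrFp_eq0 prime_dvd_bin. Qed.

Lemma lucasFp_digit_succ A a : (a.+1 < p)%N ->
  (forall B b, (b < p)%N ->
     ('C(A * p + a, B * p + b)%:R : 'F_p) = 'C(A, B)%:R * 'C(a, b)%:R) ->
  (forall B b, (b < p)%N ->
     ('C(A * p + a.+1, B * p + b)%:R : 'F_p) = 'C(A, B)%:R * 'C(a.+1, b)%:R).
Proof.
move=> lt_a1p IH B [|b] lt_bp.
  case: B => [|B]; first by rewrite !mul0n !add0n !bin0 mulr1.
  have eBp : (B.+1 * p + 0 = (B * p + p.-1).+1)%N by nia.
  rewrite eBp addnS binS -eBp natrD !IH ?prednK //.
  by rewrite (@bin_small a p.-1) ?mulr0 ?addr0 ?bin0 //; lia.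
rewrite !addnS binS natrD -addnS !IH //; last lia.
by rewrite -mulrDr -natrD -binS.
Qed.

Lemma lucasFp_carry A :
  (forall B b, (b < p)%N ->
     ('C(A * p + p.-1, B * p + b)%:R : 'F_p) = 'C(A, B)%:R * 'C(p.-1, b)%:R) ->
  (forall B b, (b < p)%N ->
     ('C(A.+1 * p + 0, B * p + b)%:R : 'F_p) = 'C(A.+1, B)%:R * 'C(0, b)%:R).
Proof.
move=> IH B b lt_bp; have eAp : (A.+1 * p + 0 = (A * p + p.-1).+1)%N by nia.
case: b lt_bp => [|b] lt_bp.
  case: B => [|B]; first by rewrite !mul0n !add0n !bin0 mulr1.
  have eBp : (B.+1 * p + 0 = (B * p + p.-1).+1)%N by nia.
  rewrite eAp eBp binS -eBp natrD !IH ?prednK //; try lia.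
  by rewrite !bin0 binn !mulr1 -natrD -binS.
rewrite eAp !addnS binS natrD -addnS !IH; try lia.
by rewrite -mulrDr -natrD -binS prednK // binFp_p_eq0 ?bin0n ?mulr0.
Qed.

Lemma lucasFp A a B b : (a < p)%N -> (b < p)%N ->
  ('C(A * p + a, B * p + b)%:R : 'F_p) = 'C(A, B)%:R * 'C(a, b)%:R.
Proof.
elim: A a B b => [|A IHA] a B b lt_ap.
  case: B => [|B] lt_bp; first by rewrite !mul0n !add0n bin0 mul1r.
  by rewrite bin0n mul0r bin_small //; nia.
suff lucas0 B' b' : (b' < p)%N ->
    ('C(A.+1 * p + 0, B' * p + b')%:R : 'F_p) = 'C(A.+1, B')%:R * 'C(0, b')%:R.
  elim: a lt_ap B b => [|a IHa] lt_ap; first exact: lucas0.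
  by apply: lucasFp_digit_succ => // B' b'; apply: IHa; lia.
by apply: lucasFp_carry => B'' b''; apply: IHA; rewrite prednK.
Qed.

Lemma binFp_pred_p i : (i < p)%N -> ('C(p.-1, i)%:R : 'F_p) = (-1) ^+ i.
Proof.
elim: i => [|i IH] lt_ip; first by rewrite bin0 expr0.
have : ('C(p, i.+1)%:R : 'F_p) = 0 by apply: binFp_p_eq0; lia.
have -> : 'C(p, i.+1) = ('C(p.-1, i.+1) + 'C(p.-1, i))%N by rewrite -binS prednK.
rewrite natrD IH; last lia.
by move/eqP; rewrite addr_eq0 => /eqP ->; rewrite exprS mulN1r.
Qed.

Lemma natrFp_sub_p i j : (i + j)%N = p -> (i%:R : 'F_p) = - j%:R.
Proof. by move=> eij; apply/eqP; rewrite -subr_eq0 opprK -natrD eij pchar_Fp_0. Qed.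

Lemma natrFp_divp a c d : ~~ (p %| a)%N -> (a * c = p * d)%N ->
  (p %| c)%N /\ (a%:R * (c %/ p)%:R = d%:R :> 'F_p).
Proof.
move=> p_ndvd_a eac.
have : (p %| a * c)%N by rewrite eac dvdn_mulr.
rewrite Euclid_dvdM // (negPf p_ndvd_a) /= => p_dvd_c.
split=> //; rewrite -natrM; congr (_%:R).
apply/eqP; rewrite -(eqn_pmul2l p_gt0) -eac -{2}(divnK p_dvd_c).
by apply/eqP; ring.
Qed.

Lemma prime_ndvd_mulp_add A i : (0 < i < p)%N -> ~~ (p %| A * p + i)%N.
Proof. by move=> i_bnd; rewrite -natrFp_eq0 natrFp_mulp_add natrFp_neq0. Qed.

Lemma binFp_mulp n k j : (0 < j < p)%N -> (k < n)%N ->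
  (p %| 'C(n * p, k * p + j))%N /\
  (j%:R * ('C(n * p, k * p + j) %/ p)%:R
     = (-1) ^+ j.-1 * (n - k)%:R * 'C(n, k)%:R :> 'F_p).
Proof.
move=> j_bnd lt_kn.
have ekj : (k * p + j = (k * p + j.-1).+1)%N by lia.
have ediag : ((k * p + j) * 'C(n * p, k * p + j)
              = p * (n * 'C((n * p).-1, k * p + j.-1)))%N.
  by rewrite ekj -mul_bin_diag; ring.
have [p_dvd_bin] := natrFp_divp (prime_ndvd_mulp_add k j_bnd) ediag.
rewrite natrFp_mulp_add => ->; split=> //.
have -> : (n * p).-1 = ((n - 1) * p + p.-1)%N by nia.
rewrite natrM lucasFp ?binFp_pred_p; try lia.
have := mul_bin_down n k; rewrite -subn1 => /(congr1 (fun m => m%:R : 'F_p)).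
rewrite !natrM => edown; rewrite mulrA edown; ring.
Qed.

Lemma natrFp_fermat x : ~~ (p %| x)%N -> (x%:R : 'F_p) ^+ p.-1 = 1.
Proof.
move=> p_ndvd; have x_neq0 : (x%:R : 'F_p) != 0 by rewrite natrFp_eq0.
apply: (mulfI x_neq0); rewrite mulr1 -exprS prednK ?prime_gt0 // -natrX.
by rewrite -(Fp_nat_mod p_pr (x ^ p)) fermat_little // Fp_nat_mod.
Qed.

Lemma prime_ndvd_fact m : (m < p)%N -> ~~ (p %| m`!)%N.
Proof.
elim: m => [|m IH] lt_mp; first by rewrite dvdn1 neq_ltn (prime_gt1 p_pr) orbT.
rewrite factS Euclid_dvdM // negb_or IH ?andbT; last lia.
by apply/negP => /dvdn_leq; lia.
Qed.

End PrimeField.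

(** * Bernoulli numbers and Faulhaber's formula *)

Lemma size_bern_seq m : size (bern_seq m) = m.+1.
Proof. by elim: m => //= m IH; rewrite size_rcons IH. Qed.

Lemma nth_bern_seq m i : (i <= m)%N -> (bern_seq m)`_i = bernoulli i.
Proof.
elim: m => [|m IH] le_im; first by have -> : i = 0%N by lia.
have [lt_im1 | ge_im1] := ltnP i m.+1.
  by rewrite /= nth_rcons size_bern_seq lt_im1 IH.
by have -> : i = m.+1 by lia.
Qed.

Lemma bernoulliS m : bernoulli m.+1 =
  - (m.+2%:R)^-1 * \sum_(i < m.+1) 'C(m.+2, i)%:R * bernoulli i.
Proof.
rewrite /bernoulli /= nth_rcons size_bern_seq ltnn eqxx.
by congr (_ * _); apply: eq_bigr => i _; rewrite nth_bern_seq // -ltnS.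
Qed.

Lemma sum_bin_bernoulli m : (0 < m)%N ->
  \sum_(i < m.+1) 'C(m.+1, i)%:R * bernoulli i = 0.
Proof.
case: m => // m _; rewrite big_ord_recr /= bernoulliS binSn.
by rewrite mulrA mulrN mulfV ?pnatr_eq0 // mulN1r subrr.
Qed.

Lemma bin_mul_subC a i l : (i + l <= a)%N ->
  ('C(a, i) * 'C(a - i, l) = 'C(a, l) * 'C(a - l, i))%N.
Proof.
move=> le_ila; apply/eqP.
rewrite -(@eqn_pmul2r (i`! * l`! * (a - i - l)`!)) ?muln_gt0 ?fact_gt0 //; apply/eqP.
transitivity ('C(a, i) * (i`! * ('C(a - i, l) * (l`! * (a - i - l)`!))))%N; first ring.
transitivity ('C(a, l) * (l`! * ('C(a - l, i) * (i`! * (a - l - i)`!))))%N.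
  by rewrite !bin_fact //; lia.
by rewrite (_ : a - l - i = a - i - l)%N; [ring | lia].
Qed.

Lemma exchange_big_nat_triangle (V : nmodType) (F : nat -> nat -> V) n :
  \sum_(0 <= i < n) \sum_(0 <= l < n - i) F i l
    = \sum_(0 <= l < n) \sum_(0 <= i < n - l) F i l.
Proof.
have triangleE (G : nat -> nat -> V) :
    \sum_(0 <= i < n) \sum_(0 <= l < n - i) G i l
      = \sum_(0 <= i < n) \sum_(0 <= l < n | (i + l < n)%N) G i l.
  apply: eq_big_nat => i lt_in.
  rewrite (@big_nat_widen _ _ _ 0 (n - i) n); last lia.
  by apply: eq_bigl => l /=; apply/idP/idP; lia.
rewrite !triangleE; under eq_bigr => i _ do rewrite big_mkcond /=.
rewrite (@exchange_big_nat _ _ _ 0 n 0 n xpredT xpredT); apply: eq_bigr => l _.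
by rewrite [RHS]big_mkcond; apply: eq_bigr => i _ /=; rewrite addnC.
Qed.

Lemma exprS_natr_sum (R : comPzRingType) (N r : nat) :
  (N.+1%:R : R) ^+ r = N%:R ^+ r + \sum_(0 <= l < r) 'C(r, l)%:R * N%:R ^+ l.
Proof.
rewrite -addn1 natrD exprD1n big_ord_recr /= binn mulr1n addrC big_mkord.
by congr (_ + _); apply: eq_bigr => l _; rewrite mulr_natl.
Qed.

Lemma faulhaber m N : (m.+1)%:R * \sum_(0 <= j < N) (j%:R : rat) ^+ m =
  \sum_(0 <= i < m.+1) 'C(m.+1, i)%:R * bernoulli i * N%:R ^+ (m.+1 - i).
Proof.
elim: N => [|N IH].
  rewrite big_geq // mulr0 big_mkord; symmetry; apply: big1 => i _.
  by rewrite expr0n (_ : (m.+1 - i == 0)%N = false) ?mulr0 //; have := ltn_ord i; lia.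
rewrite big_nat_recr //= mulrDr IH.
under [in RHS]eq_bigr => i _ do rewrite exprS_natr_sum mulrDr.
rewrite big_split /=; congr (_ + _).
under eq_bigr => i _ do rewrite big_distrr /=.
transitivity (\sum_(0 <= l < m.+1) 'C(m.+1, l)%:R * N%:R ^+ l *
    \sum_(0 <= i < m.+1 - l) 'C(m.+1 - l, i)%:R * (bernoulli i : rat)); last first.
  rewrite -exchange_big_nat_triangle; apply: eq_big_nat => i lt_im.
  rewrite big_distrr /=; apply: eq_big_nat => l lt_lim.
  have /(congr1 (fun n => n%:R : rat)) := @bin_mul_subC m.+1 i l ltac:(lia).
  rewrite !natrM => ebin.
  transitivity ('C(m.+1, i)%:R * 'C(m.+1 - i, l)%:R * (bernoulli l * N%:R ^+ i) : rat).
    by ring.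
  by rewrite ebin; ring.
rewrite big_nat_recr //= subSn // subnn big1_seq ?add0r.
  by rewrite big_nat1 binSn bin0 mulr1.
move=> l; rewrite mem_iota => /andP [_ lt_lm].
rewrite (_ : m.+1 - l = (m - l).+1)%N; last lia.
by rewrite big_mkord sum_bin_bernoulli ?mulr0 //; lia.
Qed.

Lemma dvdn_fact_leq m n : (m <= n)%N -> (m`! %| n`!)%N.
Proof.
by move=> le_mn; rewrite -(ffact_fact (leq_subr m n)) subKn // dvdn_mull.
Qed.

Lemma bernoulli_fact_int i : ((i.+1)`!%:R * bernoulli i : rat) \is a Num.int.
Proof.
elim: i {-2}i (leqnn i) => [|n IH] [|m] // le_mn.
rewrite bernoulliS factS natrM mulNr mulrN -mulrA mulrCA mulVKf ?pnatr_eq0 //.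
rewrite rpredN big_distrr /=; apply: rpred_sum => i _.
have /dvdnP [q ->] := @dvdn_fact_leq i.+1 m.+1 (ltn_ord i).
rewrite natrM mulrCA -mulrA; apply: rpredM; first exact: natr_int.
by apply: rpredM; [exact: natr_int | apply: IH; have := ltn_ord i; lia].
Qed.

Lemma faulhaber_mod_sqr E N beta :
  ((E.+1)`!%:R * bernoulli E = beta%:~R :> rat) ->
  exists y : int, ((E.+1 * (E.+1)`! * \sum_(0 <= j < N) j ^ E)%N%:Z
     = (N ^ 2)%N%:Z * y + (E.+1 * N)%N%:Z * beta)%R.
Proof.
move=> ebeta; have := faulhaber E N.
rewrite big_nat_recr //= subSn // subnn binSn expr1.
set Y := \sum_(0 <= i < E) 'C(E.+1, i)%:R * ((E.+1)`!%:R * bernoulli i)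
                          * (N%:R : rat) ^+ (E.-1 - i).
have : Y \is a Num.int.
  rewrite /Y big_seq_cond; apply: rpred_sum => i /andP [lt_iE _].
  rewrite mem_iota in lt_iE; apply: rpredM; last exact/rpredX/natr_int.
  apply: rpredM; first exact: natr_int.
  have /dvdnP [q ->] := @dvdn_fact_leq i.+1 E.+1 ltac:(lia).
  by rewrite natrM -mulrA; apply: rpredM; [exact: natr_int | exact: bernoulli_fact_int].
case/intrP => y eY efaul; exists y; apply: (@intr_inj rat).
rewrite rmorphD !rmorphM /= -!pmulrn -eY -ebeta /Y.
rewrite !natrM natr_sum; under eq_bigr => j _ do rewrite natrX.
rewrite -mulrA mulrCA efaul mulrDr; congr (_ + _); last by ring.
rewrite !big_distrr /=; apply: eq_big_nat => i lt_iE.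
by rewrite (_ : E.+1 - i = E.-1 - i + 2)%N ?exprD; [ring | lia].
Qed.

(** * Power sums modulo a square *)

Lemma intr_Zp_eq0 (m : nat) (z : int) : (1 < m)%N ->
  (z%:~R : 'Z_m) = 0 -> (m %| z)%Z.
Proof.
move=> m_gt1; have natr_eq0 (n : nat) : (n%:R : 'Z_m) = 0 -> (m %| n)%N.
  by move=> /(congr1 (@nat_of_ord _)); rewrite val_Zp_nat //= => /eqP.
rewrite dvdzE; case: z => n /=; first exact: natr_eq0.
by rewrite NegzE mulrNz => /eqP; rewrite oppr_eq0 => /eqP /natr_eq0.
Qed.

Lemma exprDr_sqr0 (R : comPzRingType) (x q : R) n : q * q = 0 ->
  (x + q) ^+ n.+1 = x ^+ n.+1 + n.+1%:R * x ^+ n * q.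
Proof.
move=> q2; elim: n => [|n IH]; first by rewrite expr1 expr0 mulr1 mul1r.
rewrite exprS IH.
transitivity (x ^+ n.+2 + (n.+1%:R + 1) * x ^+ n.+1 * q + n.+1%:R * x ^+ n * (q * q)).
  by rewrite !exprS; ring.
by rewrite q2 mulr0 addr0 natr1.
Qed.

Lemma even_exprBC (R : pzRingType) (a b : R) n : ~~ odd n -> (a - b) ^+ n = (b - a) ^+ n.
Proof. by move=> ev_n; rewrite -opprB exprNn -signr_odd (negPf ev_n) mul1r. Qed.

Lemma big_nat1_odd_fold (V : nmodType) (f : nat -> V) h :
  \sum_(1 <= j < (2 * h + 1)%N) f j
    = \sum_(0 <= j < h) f j.+1 + \sum_(0 <= j < h) f (2 * h + 1 - j.+1)%N.
Proof.
rewrite (@big_cat_nat _ _ _ h.+1) //=; try lia.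
rewrite -[1%N]add0n -[h.+1]add0n !big_addn subn1 (_ : 2 * h + 1 - h.+1 = h)%N; last lia.
congr (_ + _); first by apply: eq_big_nat => j _; rewrite addn1.
by rewrite big_nat_rev /=; apply: eq_big_nat => j lt_jh; congr f; lia.
Qed.

Lemma big_nat_odd_pairs (V : nmodType) (f : nat -> V) h :
  \sum_(0 <= j < (2 * h + 1)%N) f j
    = f 0%N + \sum_(0 <= j < h) (f (2 * j + 1)%N + f (2 * j.+1)%N).
Proof.
elim: h => [|h IH]; first by rewrite big_nat1 big_geq // addr0.
rewrite (_ : 2 * h.+1 + 1 = (2 * h + 1).+2)%N; last lia.
rewrite big_nat_recr // big_nat_recr // IH big_nat_recr //= -!addrA.
by do 3 congr (_ + _); congr f; lia.
Qed.

Lemma big_nat_odd_parity (V : nmodType) (f : nat -> V) h :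
  \sum_(0 <= j < (2 * h + 1)%N) f j = f 0%N
    + \sum_(0 <= j < h) f (2 * j.+1)%N + \sum_(0 <= j < h) f (2 * h + 1 - 2 * j.+1)%N.
Proof.
rewrite big_nat_odd_pairs big_split /= -addrA; congr (_ + _).
rewrite addrC; congr (_ + _).
by rewrite big_nat_rev /=; apply: eq_big_nat => j lt_jh; congr f; lia.
Qed.

(* Pairing j with 2h+1-j, resp. sorting j by parity, expresses the power sum
   over [0, 2h+1) in two ways; modulo (2h+1)^2 the difference isolates the
   half sum of the next lower power. *)
Lemma sum_powers_odd_half (R : comPzRingType) h e : odd e ->
  ((2 * h + 1)%N%:R : R) * (2 * h + 1)%N%:R = 0 ->
  (1 - 2 ^+ e.+1) * (\sum_(0 <= j < (2 * h + 1)%N) (j%:R : R) ^+ e.+1)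
  = e.+1%:R * 2 ^+ e * (2 * h + 1)%N%:R * (\sum_(0 <= j < h) (j.+1%:R : R) ^+ e).
Proof.
move=> odd_e; set q := ((2 * h + 1)%N%:R : R) => q2.
have q2N : (- q) * (- q) = 0 by rewrite mulrNN.
have ev_e1 : ~~ odd e.+1 by rewrite /= odd_e.
set S := \sum_(0 <= j < _) _.
set T := \sum_(0 <= j < h) (j.+1%:R : R) ^+ e.+1.
set U := \sum_(0 <= j < h) (j.+1%:R : R) ^+ e.
have S_fold : S = T + T - e.+1%:R * q * U.
  rewrite /S big_ltn; last lia.
  rewrite expr0n add0r big_nat1_odd_fold -/T -addrA.
  congr (_ + _); rewrite /U big_distrr /= -sumrB; apply: eq_big_nat => j lt_jh.
  rewrite natrB; last lia.
  by rewrite -/q even_exprBC // exprDr_sqr0 // mulrN; ring.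
have S_parity : S = 2 ^+ e.+1 * T + 2 ^+ e.+1 * T - e.+1%:R * 2 ^+ e * q * U.
  rewrite /S big_nat_odd_parity /= expr0n add0r /T /U !big_distrr /= -addrA.
  congr (_ + _); first by apply: eq_big_nat => j _; rewrite natrM exprMn.
  rewrite -sumrB; apply: eq_big_nat => j lt_jh.
  rewrite natrB; last lia.
  by rewrite -/q even_exprBC // natrM exprDr_sqr0 // !exprMn mulrN; ring.
have -> : (1 - 2 ^+ e.+1) * S = S - 2 ^+ e.+1 * S by ring.
by rewrite {1}S_parity S_fold exprS; ring.
Qed.

(** * Central binomial coefficients *)

Definition central_bin N := 'C(2 * N, N).

Lemma central_binS N :
  (N.+1 * central_bin N.+1 = 2 * (2 * N + 1) * central_bin N)%N.
Proof.
rewrite /central_bin (_ : 2 * N.+1 = (2 * N + 1).+1)%N; last lia.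
rewrite binS -(@bin_sub (2 * N + 1) N); last lia.
rewrite (_ : 2 * N + 1 - N = N.+1)%N; last lia.
have := mul_bin_diag (2 * N + 1) N; rewrite (_ : (2 * N + 1).-1 = 2 * N)%N; last lia.
by move=> ediag; rewrite -mulnA ediag; ring.
Qed.

Definition summand n k p j :=
  ('C(n * p, k * p + j) ^ 2 * 'C(2 * k * p + 2 * j, k * p + j)
   * 'C(2 * n * p - 2 * k * p - 2 * j, n * p - k * p - j))%N.

Lemma summandE n k p j : (k < n)%N -> (j <= p)%N ->
  summand n k p j = ('C(n * p, k * p + j) ^ 2 * central_bin (k * p + j)
                     * central_bin ((n - k - 1) * p + (p - j)))%N.
Proof.
move=> lt_kn le_jp; rewrite /summand /central_bin -!mulnA.
have enp : (n * p = k * p + (n - k - 1) * p + p)%N.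
  have {1}-> : n = (k + (n - k - 1)).+1 by lia.
  ring.
rewrite enp; move: (k * p)%N ((n - k - 1) * p)%N => a b.
by congr (_ * (_ * ('C(_, _) * 'C(_, _)))); lia.
Qed.

Section OddPrime.

Variables p h : nat.
Hypotheses (p_pr : prime p) (p_eq : p = (2 * h + 1)%N).

Let h_gt0 : (0 < h)%N. Proof. by have := prime_gt1 p_pr; lia. Qed.

Let twice_h : 2 * (h%:R : 'F_p) = -1.
Proof. by rewrite -natrM (@natrFp_sub_p _ p_pr _ 1%N) -?p_eq. Qed.

Lemma central_binFp_half : ((central_bin h)%:R : 'F_p) = (-1) ^+ h.
Proof. by rewrite /central_bin (_ : 2 * h = p.-1)%N ?binFp_pred_p //; lia. Qed.

Lemma central_bin_carry_first A :
  (p %| central_bin (A * p + h.+1))%N /\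
  ((central_bin (A * p + h.+1) %/ p)%:R * h%:R * (central_bin h)%:R
     = - 2 * (2 * A + 1)%:R * (central_bin A)%:R :> 'F_p).
Proof.
have erec : ((A * p + h.+1) * central_bin (A * p + h.+1)
             = p * (2 * (2 * A + 1) * central_bin (A * p + h)))%N.
  rewrite addnS central_binS (_ : 2 * (A * p + h) + 1 = (2 * A + 1) * p)%N; first ring.
  by rewrite p_eq; ring.
have p_ndvd : ~~ (p %| A * p + h.+1)%N by apply: prime_ndvd_mulp_add; lia.
have [p_dvd] := natrFp_divp p_pr p_ndvd erec.
rewrite natrFp_mulp_add // {2}/central_bin.
rewrite (_ : 2 * (A * p + h) = 2 * A * p + 2 * h)%N; last ring.
rewrite !natrM lucasFp //; try lia.
rewrite -/(central_bin A) -/(central_bin h) central_binFp_half.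
set y := (_ %/ p)%N => ey; split=> //.
have -> : (y%:R : 'F_p) = 2 * (h.+1%:R * y%:R).
  by rewrite mulrA -(addn1 h) natrD mulrDr twice_h; ring.
rewrite ey; transitivity (2 * h%:R * (2 * (2 * A + 1)%:R * (central_bin A)%:R)
                           * ((-1) ^+ h) ^+ 2 : 'F_p); first ring.
by rewrite twice_h sqrr_sign; ring.
Qed.

Lemma central_bin_carry_succ A i : (h < i)%N -> (i.+1 < p)%N ->
  (p %| central_bin (A * p + i))%N ->
  (central_bin (A * p + i) %/ p)%:R * (p - i)%:R * (central_bin (p - i))%:R
     = - 2 * (2 * A + 1)%:R * (central_bin A)%:R :> 'F_p ->
  (p %| central_bin (A * p + i.+1))%N /\
  ((central_bin (A * p + i.+1) %/ p)%:R * (p - i.+1)%:R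
     * (central_bin (p - i.+1))%:R
     = - 2 * (2 * A + 1)%:R * (central_bin A)%:R :> 'F_p).
Proof.
move=> lt_hi lt_i1p p_dvd IH.
set j := (p - i.+1)%N; rewrite (_ : p - i = j.+1)%N in IH; last lia.
set y := (central_bin (A * p + i) %/ p)%N in IH.
have erec : ((A * p + i.+1) * central_bin (A * p + i.+1)
             = p * (2 * (2 * (A * p + i) + 1) * y))%N.
  by rewrite addnS central_binS -{1}(divnK p_dvd); ring.
have p_ndvd : ~~ (p %| A * p + i.+1)%N by apply: prime_ndvd_mulp_add; lia.
have [p_dvd' ediv] := natrFp_divp p_pr p_ndvd erec; split=> //.
set y' := (_ %/ p)%N in ediv *.
rewrite natrFp_mulp_add // !natrM in ediv.
rewrite (_ : 2 * (A * p + i) + 1 = 2 * A * p + (2 * i + 1))%N in ediv; last ring.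
rewrite natrFp_mulp_add // natrD natrM in ediv.
have ei1 : (i.+1%:R : 'F_p) = - j%:R by apply: natrFp_sub_p => //; lia.
have ei : (i%:R : 'F_p) = - j%:R - 1 by rewrite -ei1 -natr1 addrK.
have recj : (j.+1%:R * (central_bin j.+1)%:R : 'F_p)
            = 2 * (2 * j%:R + 1) * (central_bin j)%:R.
  by have := congr1 (fun m => m%:R : 'F_p) (central_binS j); rewrite !natrM natrD natrM.
have ey' : (y'%:R : 'F_p) * j%:R = 2 * (2 * j%:R + 1) * y%:R.
  by apply: oppr_inj; rewrite mulrC -mulNr -ei1 ediv ei; ring.
by rewrite -IH -!mulrA recj mulrA ey'; ring.
Qed.

(* For h < i < p, doubling the last digit of Ap + i carries, which makes p
   divide C(2(Ap + i), Ap + i); the invariant pins down the quotient mod p. *)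
Lemma central_bin_carry A i : (h < i < p)%N ->
  (p %| central_bin (A * p + i))%N /\
  ((central_bin (A * p + i) %/ p)%:R * (p - i)%:R * (central_bin (p - i))%:R
     = - 2 * (2 * A + 1)%:R * (central_bin A)%:R :> 'F_p).
Proof.
move=> i_bnd; have [d ei] : exists d, i = (h.+1 + d)%N by exists (i - h.+1)%N; lia.
rewrite {}ei in i_bnd *; elim: d i_bnd => [|d IH] i_bnd.
  by rewrite addn0 (_ : p - h.+1 = h)%N; [exact: central_bin_carry_first | lia].
have [p_dvd carry_d] := IH ltac:(lia).
by rewrite addnS; apply: central_bin_carry_succ => //; lia.
Qed.

Section Summands.

Variables n k : nat.
Hypothesis lt_kn : (k < n)%N.

Lemma summand_low j : (0 < j <= h)%N ->
  (p ^ 3 %| summand n k p j)%N /\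
  ((summand n k p j %/ p ^ 3)%:R * j%:R ^+ 3
     = - 2 * (n - k)%:R ^+ 2 * 'C(n, k)%:R ^+ 2 * (central_bin k)%:R
       * (central_bin (n - k - 1))%:R * (2 * (n - k - 1) + 1)%:R :> 'F_p).
Proof.
move=> j_bnd; have j_lt_p : (0 < j < p)%N by lia.
have [p_dvd1 ex] := binFp_mulp p_pr j_lt_p lt_kn.
have pj_bnd : (h < p - j < p)%N by lia.
have [p_dvd3] := central_bin_carry (n - k - 1) pj_bnd.
rewrite subKn; last lia.
rewrite summandE //; last lia.
set x := ('C(_, _) %/ p)%N in ex *; set y := (central_bin _ %/ p)%N => ey.
rewrite -(divnK p_dvd1) -(divnK p_dvd3) -/x -/y.
rewrite (_ : (x * p) ^ 2 * _ * (y * p)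
           = p ^ 3 * (x ^ 2 * central_bin (k * p + j) * y))%N; last ring.
rewrite mulKn ?expn_gt0 ?prime_gt0 //; split; first exact: dvdn_mulr.
rewrite [central_bin (k * p + j)]/central_bin.
rewrite (_ : 2 * (k * p + j) = 2 * k * p + 2 * j)%N; last ring.
rewrite !natrM lucasFp // -/(central_bin k) -/(central_bin j); try lia.
transitivity ((j%:R * x%:R) ^+ 2 * (central_bin k)%:R
              * (y%:R * j%:R * (central_bin j)%:R) : 'F_p); first ring.
by rewrite ex ey !exprMn sqrr_sign; ring.
Qed.

Lemma summand_high j : (h < j < p)%N ->
  (p ^ 3 %| summand n k p j)%N /\
  ((summand n k p j %/ p ^ 3)%:R * (p - j)%:R ^+ 3
     = - 2 * (n - k)%:R ^+ 2 * 'C(n, k)%:R ^+ 2 * (central_bin k)%:R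
       * (central_bin (n - k - 1))%:R * (2 * k + 1)%:R :> 'F_p).
Proof.
move=> j_bnd; have j_lt_p : (0 < j < p)%N by lia.
have [p_dvd1 ex] := binFp_mulp p_pr j_lt_p lt_kn.
have [p_dvd2] := central_bin_carry k j_bnd.
rewrite summandE //; last lia.
set x := ('C(_, _) %/ p)%N in ex *; set y := (central_bin _ %/ p)%N => ey.
rewrite -(divnK p_dvd1) -(divnK p_dvd2) -/x -/y.
rewrite (_ : (x * p) ^ 2 * (y * p) * _
           = p ^ 3 * (x ^ 2 * y * central_bin ((n - k - 1) * p + (p - j))))%N; last ring.
rewrite mulKn ?expn_gt0 ?prime_gt0 //; split; first exact: dvdn_mulr.
rewrite [central_bin (_ + (p - j))]/central_bin.
rewrite (_ : 2 * ((n - k - 1) * p + (p - j))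
           = 2 * (n - k - 1) * p + 2 * (p - j))%N; last ring.
rewrite !natrM lucasFp // -/(central_bin (n - k - 1)) -/(central_bin (p - j)); try lia.
have epj : ((p - j)%:R : 'F_p) ^+ 2 = j%:R ^+ 2.
  by rewrite (@natrFp_sub_p _ p_pr _ j) ?sqrrN //; lia.
transitivity ((j%:R * x%:R) ^+ 2 * (central_bin (n - k - 1))%:R
              * (y%:R * (p - j)%:R * (central_bin (p - j))%:R) : 'F_p).
  by rewrite exprMn -epj; ring.
by rewrite ex ey !exprMn sqrr_sign; ring.
Qed.

Lemma summand_sum_divp3 :
  (\sum_(1 <= j < p) summand n k p j
   = p ^ 3 * \sum_(1 <= j < p) (summand n k p j %/ p ^ 3))%N.
Proof.
rewrite big_distrr /=; apply: eq_big_nat => j j_bnd; rewrite mulnC divnK //.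
have [le_jh | lt_hj] := leqP j h.
  by have [] := summand_low (_ : 0 < j <= h)%N; first lia.
by have [] := summand_high (_ : h < j < p)%N; first lia.
Qed.

Lemma sum_summand_divp3Fp beta :
  (p - 2)`!%:R * \sum_(0 <= j < h) (j.+1%:R^-1) ^+ 3 = - 2 * beta%:~R :> 'F_p ->
  (p - 2)`!%:R * \sum_(1 <= j < p) (summand n k p j %/ p ^ 3)%:R
  = 8 * beta%:~R * n%:R * (n - k)%:R ^+ 2 * 'C(n, k)%:R ^+ 2
    * (central_bin k)%:R * (central_bin (n - k - 1))%:R :> 'F_p.
Proof.
move=> eharm; rewrite p_eq big_nat1_odd_fold -p_eq.
set X := (n - k)%:R ^+ 2 * 'C(n, k)%:R ^+ 2 * (central_bin k)%:R
         * (central_bin (n - k - 1))%:R : 'F_p.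
have inv3 (x c y : 'F_p) : y != 0 -> x * y ^+ 3 = c -> x = c * (y^-1) ^+ 3.
  by move=> y_neq0 <-; rewrite exprVn mulfK // expf_neq0.
have -> : \sum_(0 <= j < h) ((summand n k p j.+1 %/ p ^ 3)%:R : 'F_p)
          = - 2 * X * (2 * (n - k - 1) + 1)%:R * \sum_(0 <= j < h) (j.+1%:R^-1) ^+ 3.
  rewrite big_distrr /=; apply: eq_big_nat => j lt_jh.
  have j_bnd : (0 < j.+1 <= h)%N by lia.
  have [_ e] := summand_low j_bnd.
  by rewrite (inv3 _ _ _ (natrFp_neq0 p_pr (_ : 0 < j.+1 < p)%N) e) /X; [ring | lia].
have -> : \sum_(0 <= j < h) ((summand n k p (p - j.+1) %/ p ^ 3)%:R : 'F_p)
          = - 2 * X * (2 * k + 1)%:R * \sum_(0 <= j < h) (j.+1%:R^-1) ^+ 3.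
  rewrite big_distrr /=; apply: eq_big_nat => j lt_jh.
  have j_bnd : (h < p - j.+1 < p)%N by lia.
  have [_] := summand_high j_bnd; rewrite subKn => [e|]; last lia.
  by rewrite (inv3 _ _ _ (natrFp_neq0 p_pr (_ : 0 < j.+1 < p)%N) e) /X; [ring | lia].
rewrite -mulrDl mulrCA eharm.
have en : ((2 * (n - k - 1) + 1)%N%:R + (2 * k + 1)%N%:R : 'F_p) = 2 * n%:R.
  by rewrite -natrD -natrM; congr (_%:R); lia.
transitivity (- 2 * X * ((2 * (n - k - 1) + 1)%N%:R + (2 * k + 1)%N%:R)
              * (- 2 * beta%:~R)); first ring.
by rewrite en /X; ring.
Qed.

End Summands.

Hypothesis h_ge2 : (2 <= h)%N.

Let p2_gt1 : (1 < p ^ 2)%N.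
Proof. by rewrite (ltn_trans (prime_gt1 p_pr)) // -{1}[p]expn1 ltn_exp2l ?prime_gt1. Qed.

Lemma power_sum_bernoulliFp beta :
  ((p - 2)`!%:R * bernoulli (p - 3) = beta%:~R :> rat) ->
  (1 - 2 ^+ (p - 3)) * (p - 2)%:R * beta%:~R
  = (p - 2)%:R * (p - 2)`!%:R * (p - 3)%:R * 2 ^+ (p - 4)
    * \sum_(0 <= j < h) j.+1%:R ^+ (p - 4) :> 'F_p.
Proof.
rewrite (_ : p - 2 = (p - 3).+1)%N; last lia.
rewrite (_ : p - 4 = (p - 3).-1)%N; last lia.
set E := (p - 3)%N; set K := (E.+1)`! => ebeta.
have [y ey] := faulhaber_mod_sqr p ebeta.
have odd_e : odd E.-1.
  by rewrite /E p_eq (_ : (2 * h + 1 - 3).-1 = (2 * (h - 2)).+1)%N /= ?odd_double //; lia.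
have q2 : ((2 * h + 1)%N%:R : 'Z_(p ^ 2)) * (2 * h + 1)%N%:R = 0.
  by rewrite -p_eq -natrM mulnn pchar_Zp.
have := sum_powers_odd_half odd_e q2; rewrite -p_eq prednK => [ehalf|]; last lia.
set Zi : int := (1 - 2 ^+ E) * E.+1%:R * beta
  - E.+1%:R * K%:R * E%:R * 2 ^+ E.-1 * \sum_(0 <= j < h) j.+1%:R ^+ E.-1.
have ZiE (R : comPzRingType) : (Zi%:~R : R) = (1 - 2 ^+ E) * E.+1%:R * beta%:~R
    - E.+1%:R * K%:R * E%:R * 2 ^+ E.-1 * \sum_(0 <= j < h) j.+1%:R ^+ E.-1.
  rewrite /Zi !(rmorphB, rmorphM, rmorph_sum, rmorph1, rmorph_nat, rmorphXn) /=.
  by under eq_bigr => j _ do rewrite rmorphXn rmorph_nat.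
have eyZ : (E.+1%:R * K%:R * \sum_(0 <= j < p) j%:R ^+ E : 'Z_(p ^ 2))
           = E.+1%:R * p%:R * beta%:~R.
  have /(congr1 (fun z : int => z%:~R : 'Z_(p ^ 2))) := ey.
  rewrite /= intrD !intrM -!pmulrn pchar_Zp // mul0r add0r !natrM natr_sum.
  by under eq_bigr => j _ do rewrite natrX.
have pZi : ((p%:Z * Zi)%:~R : 'Z_(p ^ 2)) = 0.
  rewrite intrM ZiE -pmulrn.
  transitivity ((1 - 2 ^+ E) * (E.+1%:R * p%:R * beta%:~R)
    - E.+1%:R * K%:R * (E%:R * 2 ^+ E.-1 * p%:R * \sum_(0 <= j < h) j.+1%:R ^+ E.-1)
    : 'Z_(p ^ 2)); first ring.
  by rewrite -eyZ -ehalf; ring.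
have := intr_Zp_eq0 p2_gt1 pZi.
rewrite (_ : (p ^ 2)%N%:Z = p%:Z * p%:Z) ?dvdz_mul2l; last by rewrite -mulnn PoszM.
  by rewrite (dvdz_pcharf (pchar_Fp p_pr)) ZiE subr_eq0 => /eqP.
by rewrite eqz_nat -lt0n prime_gt0.
Qed.

Lemma natrFp_pow_pred_p4 x : (0 < x < p)%N ->
  (x%:R : 'F_p) ^+ (p - 4) = (x%:R^-1) ^+ 3.
Proof.
move=> x_bnd; have x_neq0 := natrFp_neq0 p_pr x_bnd.
apply: (mulIf (expf_neq0 3 x_neq0)); rewrite -exprD -exprMn mulVf // expr1n.
by rewrite (_ : p - 4 + 3 = p.-1)%N ?natrFp_fermat -?(natrFp_eq0 p_pr) //; lia.
Qed.

(* As (p - 2)! = 1 mod p, this is the congruence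
   sum_(j <= h) j^-3 = -2 B_(p-3) mod p for the integer beta = (p - 2)! B_(p-3). *)
Lemma bernoulli_harmonic3Fp beta :
  ((p - 2)`!%:R * bernoulli (p - 3) = beta%:~R :> rat) ->
  (p - 2)`!%:R * \sum_(0 <= j < h) (j.+1%:R^-1) ^+ 3 = - 2 * beta%:~R :> 'F_p.
Proof.
move=> ebeta; have := power_sum_bernoulliFp ebeta.
rewrite (@natrFp_sub_p _ p_pr (p - 2) 2) ?(@natrFp_sub_p _ p_pr (p - 3) 3); try lia.
rewrite (_ : p - 3 = (p - 4).+1)%N ?exprS; last lia.
have -> : \sum_(0 <= j < h) (j.+1%:R : 'F_p) ^+ (p - 4)
          = \sum_(0 <= j < h) (j.+1%:R^-1) ^+ 3.
  by apply: eq_big_nat => j lt_jh; apply: natrFp_pow_pred_p4; lia.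
set U := \sum_(0 <= j < h) _; set b := (2 : 'F_p) ^+ (p - 4) => ebern.
have two_neq0 : (2 : 'F_p) != 0 by apply: natrFp_neq0; lia.
have b8 : b * 2 ^+ 3 = 1.
  rewrite /b -exprD (_ : p - 4 + 3 = p.-1)%N ?(natrFp_fermat p_pr) //; last lia.
  by rewrite -(natrFp_eq0 p_pr).
have three_neq0 : (3 : 'F_p) != 0 by apply: natrFp_neq0; lia.
apply: (mulfI (mulf_neq0 two_neq0 three_neq0)).
transitivity (b * 2 ^+ 3 * (2 * 3 * ((p - 2)`!%:R * U))); first by rewrite b8 mul1r.
transitivity (2 ^+ 3 * (- 2 * (p - 2)`!%:R * - 3 * b * U)); first ring.
rewrite -ebern; transitivity ((2 ^+ 3 - 2 * (b * 2 ^+ 3)) * - 2 * beta%:~R); first ring.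
by rewrite b8; ring.
Qed.

End OddPrime.

(** * Congruences between rationals *)

Lemma rat_congr_scale p m e a b : (0 < p)%N ->
  rat_congr p m a b -> rat_congr p (m + e) (p%:R ^+ e * a) (p%:R ^+ e * b).
Proof.
move=> p_gt0; have p_neq0 : (p%:R : rat) != 0 by rewrite pnatr_eq0 -lt0n.
rewrite /rat_congr (_ : _ / _ = (a - b) / p%:R ^+ m) //.
by rewrite -mulrBr exprD; field; rewrite !expf_neq0.
Qed.

Lemma denq_intr_div_dvdz (w d : int) : d != 0 -> (denq (w%:~R / d%:~R) %| d)%Z.
Proof.
move=> d_neq0; set x := (w%:~R / d%:~R : rat).
have ex : x * d%:~R = w%:~R by rewrite /x mulrVK ?unitfE ?intr_eq0.
have enum : numq x * d = w * denq x.
  by apply: (@intr_inj rat); rewrite !intrM numqE -ex; ring.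
have : (denq x %| numq x * d)%Z by rewrite enum dvdz_mull.
by rewrite Gauss_dvdzr // /coprimez gcdzC; exact: coprime_num_den.
Qed.

Lemma rat_congr1_intr_div p (u v : int) (K : nat) : prime p ->
  ~~ (p %| K)%N -> (p %| K%:Z * u - v)%Z -> rat_congr p 1 u%:~R (v%:~R / K%:R).
Proof.
move=> p_pr p_ndvd_K /dvdzP [w ew]; rewrite /rat_congr expr1.
have K_neq0 : (K%:R : rat) != 0 by rewrite pnatr_eq0; apply: contraNneq p_ndvd_K => ->.
have p_neq0 : (p%:R : rat) != 0 by rewrite pnatr_eq0 -lt0n prime_gt0.
have -> : (u%:~R - v%:~R / K%:R) / p%:R = w%:~R / (K%:Z)%:~R :> rat.
  have /(congr1 (fun z : int => z%:~R : rat)) := ew.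
  rewrite rmorphB !rmorphM /= -!pmulrn => ew'.
  by apply/eqP; rewrite eqr_div // mulrBl mulfVK // mulrC ew'.
have Kz_neq0 : K%:Z != 0 by rewrite -(intr_eq0 rat) -pmulrn.
apply/negP => /dvdz_trans /(_ (denq_intr_div_dvdz w Kz_neq0)).
by rewrite dvdzE (negPf p_ndvd_K).
Qed.

Lemma rat_congr_pow_natr p e (T N K : nat) (beta : int) (B : rat) : prime p ->
  ~~ (p %| K)%N -> K%:R * B = beta%:~R ->
  (K%:R * T%:R = beta%:~R * N%:R :> 'F_p) ->
  rat_congr p e.+1 (p%:R ^+ e * T%:R) (p%:R ^+ e * B * N%:R).
Proof.
move=> p_pr p_ndvd_K eB eTN.
have K_neq0 : (K%:R : rat) != 0 by rewrite pnatr_eq0; apply: contraNneq p_ndvd_K => ->.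
rewrite -mulrA -[B](mulKf K_neq0) eB -addn1 addnC.
apply: (rat_congr_scale _ (prime_gt0 p_pr)).
have := @rat_congr1_intr_div p T (beta * N) K p_pr; rewrite -[(T%:Z)%:~R]pmulrn.
rewrite rmorphM /= -pmulrn -[K%:R^-1 * _ * _]mulrA [K%:R^-1 * _]mulrC; apply=> //.
by rewrite (dvdz_pcharf (pchar_Fp p_pr)) rmorphB !rmorphM /= -!pmulrn eTN subrr.
Qed.

Unset Implicit Arguments.

Theorem mainTheorem6 (p n k : nat) :
  prime p -> (5 <= p)%N -> (k < n)%N ->
  rat_congr p 4
    ((\sum_(1 <= j < p)
        'C(n * p, k * p + j) ^ 2 * 'C(2 * k * p + 2 * j, k * p + j)
        * 'C(2 * n * p - 2 * k * p - 2 * j, n * p - k * p - j))%N%:R)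
    (8%:R * (p%:R) ^+ 3 * bernoulli (p - 3) * n%:R * ((n - k)%N%:R) ^+ 2
       * ('C(n, k) ^ 2 * 'C(2 * k, k) * 'C(2 * n - 2 * k - 2, n - k - 1))%N%:R).
Proof.
move=> p_pr p_ge5 lt_kn; set h := p./2.
have p_eq : p = (2 * h + 1)%N.
  have := odd_double_half p; rewrite -muln2.
  by have [p2 | ->] := even_prime p_pr; [rewrite p2 in p_ge5 | lia].
have [beta ebeta] : exists beta : int, (p - 2)`!%:R * bernoulli (p - 3) = beta%:~R.
  by apply/intrP; rewrite (_ : p - 2 = (p - 3).+1)%N ?bernoulli_fact_int; lia.
have h_ge2 : (2 <= h)%N by lia.
have esum := sum_summand_divp3Fp p_pr p_eq lt_kn
               (bernoulli_harmonic3Fp p_pr p_eq h_ge2 ebeta).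
rewrite (_ : (\sum_(1 <= j < p) _)%N = \sum_(1 <= j < p) summand n k p j)%N //.
rewrite (summand_sum_divp3 p_pr p_eq lt_kn) natrM natrX.
set M := ('C(n, k) ^ 2 * _ * _)%N.
rewrite (_ : 8 * _ * _ * _ * _ * _
           = p%:R ^+ 3 * bernoulli (p - 3) * (8 * n * (n - k) ^ 2 * M)%N%:R);
  last by rewrite !natrM; ring.
apply: (rat_congr_pow_natr 3 p_pr (prime_ndvd_fact p_pr _) ebeta); first lia.
rewrite natr_sum esum /M (_ : 2 * n - 2 * k - 2 = 2 * (n - k - 1))%N; last lia.
by rewrite -/(central_bin k) -/(central_bin (n - k - 1)) !natrM; ring.
Qed.
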